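(* Let $J\in\mathcal{D}(X)$, let $x\in X$, and let $\tilde u\in\tilde U(J,x)$. Then $(TJ)(f(x,\tilde u))\le(TJ)(x)$.
   Context: Setting: $X$ (state space) and $U$ (control space) are sets; for each $x\in X$, $U(x)\subset U$ is nonempty; $f:X\times U\to X$; the stage cost $g$ satisfies $0\le g(x,u)\le\infty$ for all $x\in X$, $u\in U(x)$. $\mathcal{E}^+(X)$ denotes the set of all functions $J:X\to[0,\infty]$. The Bellman operator is $(TJ)(x)=\inf_{u\in U(x)}\{g(x,u)+J(f(x,u))\}$. The region of decreasing is $\mathcal{D}(X)=\{J\in\mathcal{E}^+(X): (TJ)(x)\le J(x)\ \forall x\in X\}$. For $J\in\mathcal{E}^+(X)$ and $x\in X$, $\tilde U(J,x)=\arg\min_{u\in U(x)}\{g(x,u)+J(f(x,u))\}$. Standing assumption: for every $J\in\mathcal{E}^+(X)$ and every $x\in X$, the infimum defining $(TJ)(x)$ is attained. *)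

From HB Require Import structures.
From mathcomp Require Import all_boot all_order all_algebra.
From mathcomp Require Import all_classical all_reals ereal.
Set Implicit Arguments. Unset Strict Implicit. Unset Printing Implicit Defensive.
Import Order.TTheory GRing.Theory Num.Theory.
Local Open Scope classical_set_scope.
Local Open Scope ereal_scope.

Section DP.
Variables (R : realType) (X U : Type).
Variables (Uc : X -> set U) (f : X -> U -> X) (g : X -> U -> \bar R).

Definition Eplus : set (X -> \bar R) := [set J | forall x, 0 <= J x].

Definition bellman (J : X -> \bar R) (x : X) : \bar R :=
  ereal_inf [set g x u + J (f x u) | u in Uc x].

Definition decr_region : set (X -> \bar R) :=
  [set J | Eplus J /\ forall x, bellman J x <= J x].

Definition Utilde (J : X -> \bar R) (x : X) : set U :=
  [set u | Uc x u /\ forall v, Uc x v -> g x u + J (f x u) <= g x v + J (f x v)].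
End DP.

(* Since u~ attains the infimum defining (TJ)(x), and g >= 0,
   (TJ)(f(x,u~)) <= J(f(x,u~)) <= g(x,u~) + J(f(x,u~)) = (TJ)(x),
   the first inequality being J in D(X). *)
From mathcomp Require Import all_boot all_order all_algebra.
From mathcomp Require Import all_classical all_reals ereal.
Set Implicit Arguments. Unset Strict Implicit.
Import Order.TTheory.
Local Open Scope classical_set_scope.
Local Open Scope ereal_scope.

Section Bellman.
Variables (R : realType) (X U : Type).
Variables (Uc : X -> set U) (f : X -> U -> X) (g : X -> U -> \bar R).

Lemma bellman_le_cost (J : X -> \bar R) x u :
  Uc x u -> bellman Uc f g J x <= g x u + J (f x u).
Proof.
by move=> Uxu; apply: ge_ereal_inf; exists (g x u + J (f x u)) => //; exists u.
Qed.

Lemma Utilde_cost (J : X -> \bar R) x u :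
  Utilde Uc f g J x u -> g x u + J (f x u) = bellman Uc f g J x.
Proof.
case=> Uxu u_min; apply/eqP; rewrite eq_le bellman_le_cost // andbT.
by apply: le_ereal_inf_tmp => _ [v Uxv <-]; exact: u_min.
Qed.

End Bellman.

Theorem proposition6 (R : realType) (X U : Type)
  (Uc : X -> set U) (f : X -> U -> X) (g : X -> U -> \bar R)
  (HUne : forall x, Uc x !=set0)
  (Hg : forall x u, Uc x u -> 0 <= g x u)
  (Hattain : forall J, Eplus J -> forall x, exists2 u, Uc x u &
       g x u + J (f x u) = bellman Uc f g J x)
  (J : X -> \bar R) (HJ : decr_region Uc f g J)
  (x : X) (ut : U) (Hut : Utilde Uc f g J x ut) :
  bellman Uc f g J (f x ut) <= bellman Uc f g J x.
Proof.
have [_ TJ_le_J] := HJ.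
have [Uxut _] := Hut.
rewrite -(Utilde_cost Hut).
apply: le_trans (TJ_le_J (f x ut)) _.
exact: lee_paddl (Hg _ _ Uxut) _.
Qed.
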